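(* Let $G$ be a finite simple graph with an initial configuration $c_0$ and let $u,v\in V(G)$ with $N(u)=N(v)$. If $c_t(u)=c_t(v)$ for some $t\geq0$, then $c_r(u)=c_r(v)$ for all integers $r\geq t$.
   Context: Diffusion process: for a configuration $c_t:V(G)\to\mathbb{Z}$, $c_{t+1}(w)=c_t(w)-|\{x\in N(w): c_t(w)>c_t(x)\}|+|\{x\in N(w): c_t(w)<c_t(x)\}|$ for all $w$ simultaneously. *)

From mathcomp Require Import all_boot all_order all_algebra.
Set Implicit Arguments. Unset Strict Implicit. Unset Printing Implicit Defensive.
Import Order.TTheory GRing.Theory Num.Theory.
Local Open Scope ring_scope.

Definition simple_graph (T : finType) (e : rel T) : Prop :=
  symmetric e /\ irreflexive e.

Definition nbhd (T : finType) (e : rel T) (w : T) : {set T} := [set x | e w x].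

Definition diffuse_step (T : finType) (e : rel T) (c : T -> int) : T -> int :=
  fun w => c w - (#|[set x in nbhd e w | c x < c w]|)%:Z
               + (#|[set x in nbhd e w | c w < c x]|)%:Z.

Definition diffuse (T : finType) (e : rel T) (c0 : T -> int) (t : nat) : T -> int :=
  iter t (diffuse_step e) c0.

From mathcomp Require Import all_boot all_order all_algebra.

(* A diffusion step computes the new value at w from c w and the values of c
   on N(w) only; so two vertices with the same neighbourhood and the same
   current value get the same new value, and by induction they stay equal. *)

Section Twins.

Variables (T : finType) (e : rel T) (u v : T).
Hypothesis same_nbhd : nbhd e u = nbhd e v.

Lemma diffuse_step_twins (c : T -> int) :
  c u = c v -> diffuse_step e c u = diffuse_step e c v.
Proof. by rewrite /diffuse_step same_nbhd => ->. Qed.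

Lemma diffuse_twins (c : T -> int) (k : nat) :
  c u = c v -> diffuse e c k u = diffuse e c k v.
Proof.
move=> cuv; elim: k => [//|k IHk].
exact: diffuse_step_twins.
Qed.

End Twins.

Lemma diffuseD (T : finType) (e : rel T) (c0 : T -> int) (k t : nat) :
  diffuse e c0 (k + t) = diffuse e (diffuse e c0 t) k.
Proof. exact: iterD. Qed.

Theorem corollary11 (T : finType) (e : rel T) (c0 : T -> int) (u v : T) (t : nat) :
  simple_graph e ->
  nbhd e u = nbhd e v ->
  diffuse e c0 t u = diffuse e c0 t v ->
  forall r : nat, (t <= r)%N -> diffuse e c0 r u = diffuse e c0 r v.
Proof.
move=> _ same_nbhd eq_t r le_tr.
rewrite -(subnK le_tr) diffuseD.
exact: diffuse_twins.
Qed.
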